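(* Let $\mathbb{T}$ be a time scale, $\alpha\in]0,1]$, and let $f:\mathbb{T}\to\mathbb{R}$ be both delta and nabla fractional differentiable of order $\alpha$. Then $f$ is symmetric fractional differentiable of order $\alpha$ and, for each $t\in\mathbb{T}_\kappa^\kappa$, $$f^{\diamondsuit^\alpha}(t)=\gamma_1(t)f^{\Delta^\alpha}(t)+\gamma_2(t)f^{\nabla^\alpha}(t),$$ where $$\gamma_1(t):=\lim_{s\to t}\left[\frac{\sigma(t)-s}{\sigma(t)+2t-2s-\rho(t)}\right]^\alpha,\qquad \gamma_2(t):=\lim_{s\to t}\left[\frac{(2t-s)-\rho(t)}{\sigma(t)+2t-2s-\rho(t)}\right]^\alpha.$$
   Context: A time scale $\mathbb{T}$ is a nonempty closed subset of $\mathbb{R}$. $\sigma(t)=\inf\{s\in\mathbb{T}:s>t\}$ ($\inf\emptyset=\sup\mathbb{T}$), $\rho(t)=\sup\{s\in\mathbb{T}:s<t\}$ ($\sup\emptyset=\inf\mathbb{T}$); $f^\sigma=f\circ\sigma$, $f^\rho=f\circ\rho$. $\mathbb{T}^\kappa=\mathbb{T}\setminus\{\sup\mathbb{T}\}$ if $\sup\mathbb{T}$ is finite and left-scattered, else $\mathbb{T}$; $\mathbb{T}_\kappa=\mathbb{T}\setminus\{\inf\mathbb{T}\}$ if $\inf\mathbb{T}$ is finite and right-scattered, else $\mathbb{T}$; $\mathbb{T}_\kappa^\kappa=\mathbb{T}_\kappa\cap\mathbb{T}^\kappa$. Let $A=\,]0,1]\cap\{1/q: q\text{ odd positive integer}\}$,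 with $x^{1/q}$ the real $q$-th root. Nabla fractional derivative of order $\alpha$ at $t\in\mathbb{T}_\kappa$: the number $f^{\nabla^\alpha}(t)$ (if it exists) such that for every $\varepsilon>0$ there is $\delta>0$ with $\big|[f(s)-f^\rho(t)]-f^{\nabla^\alpha}(t)[s-\rho(t)]^\alpha\big|\le\varepsilon|s-\rho(t)|^\alpha$ for all $s\in\,]t-\delta,t+\delta[\,\cap\mathbb{T}$ if $\alpha\in A$, resp. all $s\in[t,t+\delta[\,\cap\mathbb{T}$ if $\alpha\notin A$. Delta fractional derivative of order $\alpha$ at $t\in\mathbb{T}^\kappa$: the number $f^{\Delta^\alpha}(t)$ (if it exists) such that for every $\varepsilon>0$ there is $\delta>0$ with $\big|[f^\sigma(t)-f(s)]-f^{\Delta^\alpha}(t)[\sigma(t)-s]^\alpha\big|\le\varepsilon|\sigma(t)-s|^\alpha$ for all $s\in\,]t-\delta,t+\delta[\,\cap\mathbb{T}$ if $\alpha\in A$, resp. all $s\in\,]t-\delta,t]\cap\mathbb{T}$ if $\alpha\notin A$. Symmetric fractional derivative of order $\alpha$ at $t\in\mathbb{T}_\kappa^\kappa$: the number $f^{\diamondsuit^\alpha}(t)$ (if it exists) such that for every $\varepsilon>0$ there is a neighborhood $U\subset\mathbb{T}$ of $t$ with $\big|[f^\sigma(t)-f(s)+f(2t-s)-f^\rho(t)]-f^{\diamondsuit^\alpha}(t)[\sigma(t)+2t-2s-\rho(t)]^\alpha\big|\le\varepsilon|\sigma(t)+2t-2s-\rho(t)|^\alpha$ for all $s\in U$ with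 $2t-s\in U$. A function is (delta/nabla/symmetric) fractional differentiable of order $\alpha$ if the corresponding derivative exists at every point of its domain of definition ($\mathbb{T}^\kappa$, $\mathbb{T}_\kappa$, $\mathbb{T}_\kappa^\kappa$ respectively). Limits $s\to t$ are over $s\in\mathbb{T}$, $s\ne t$. *)

From Stdlib Require Import Reals.
From Coquelicot Require Import Coquelicot.
Open Scope R_scope.

Definition time_scale (T : R -> Prop) : Prop :=
  (exists x, T x) /\
  (forall x, (forall eps, 0 < eps -> exists y, T y /\ Rabs (y - x) < eps) -> T x).

(* forward jump sigma(t) = inf {s in T | s > t}; if that set is empty
   (t = max T) this is sup T = t.  Only used at points t of T. *)
Definition ts_sigma (T : R -> Prop) (t : R) : R :=
  match Glb_Rbar (fun s => T s /\ t < s) with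
  | Finite x => x
  | _ => t
  end.

(* backward jump rho(t) = sup {s in T | s < t}; empty => inf T = t. *)
Definition ts_rho (T : R -> Prop) (t : R) : R :=
  match Lub_Rbar (fun s => T s /\ s < t) with
  | Finite x => x
  | _ => t
  end.

(* T^kappa : remove sup T if it is finite and left-scattered
   (a finite sup of a closed set belongs to it and is its maximum). *)
Definition T_kappa_up (T : R -> Prop) (t : R) : Prop :=
  T t /\ ~ ((forall s, T s -> s <= t) /\ ts_rho T t < t).

Definition T_kappa_low (T : R -> Prop) (t : R) : Prop :=
  T t /\ ~ ((forall s, T s -> t <= s) /\ t < ts_sigma T t).

Definition T_kappa_both (T : R -> Prop) (t : R) : Prop :=
  T_kappa_low T t /\ T_kappa_up T t.

Definition in_A (alpha : R) : Prop :=
  exists q : nat, Nat.odd q = true /\ alpha = 1 / INR q.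

(* Power x^alpha: x^alpha for x >= 0 (0^alpha = 0, alpha > 0), extended oddly
   to x < 0.  For alpha = 1/q in A this is exactly the real q-th root. *)
Definition fpow (alpha x : R) : R :=
  if Rlt_dec 0 x then Rpower x alpha
  else if Rlt_dec x 0 then - Rpower (- x) alpha
  else 0.

Definition is_nabla_fd (T : R -> Prop) (alpha : R) (f : R -> R) (t D : R) : Prop :=
  forall eps, 0 < eps -> exists delta, 0 < delta /\
    forall s, T s ->
      (in_A alpha -> t - delta < s < t + delta) ->
      (~ in_A alpha -> t <= s < t + delta) ->
      Rabs ((f s - f (ts_rho T t)) - D * fpow alpha (s - ts_rho T t))
        <= eps * fpow alpha (Rabs (s - ts_rho T t)).

Definition is_delta_fd (T : R -> Prop) (alpha : R) (f : R -> R) (t D : R) : Prop :=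
  forall eps, 0 < eps -> exists delta, 0 < delta /\
    forall s, T s ->
      (in_A alpha -> t - delta < s < t + delta) ->
      (~ in_A alpha -> t - delta < s <= t) ->
      Rabs ((f (ts_sigma T t) - f s) - D * fpow alpha (ts_sigma T t - s))
        <= eps * fpow alpha (Rabs (ts_sigma T t - s)).

Definition is_sym_fd (T : R -> Prop) (alpha : R) (f : R -> R) (t D : R) : Prop :=
  forall eps, 0 < eps -> exists U : R -> Prop,
    (forall x, U x -> T x) /\
    (exists delta, 0 < delta /\ forall x, T x -> Rabs (x - t) < delta -> U x) /\
    forall s, U s -> U (2 * t - s) ->
      Rabs ((f (ts_sigma T t) - f s + f (2 * t - s) - f (ts_rho T t))
             - D * fpow alpha (ts_sigma T t + 2 * t - 2 * s - ts_rho T t))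
        <= eps * fpow alpha (Rabs (ts_sigma T t + 2 * t - 2 * s - ts_rho T t)).

Definition delta_fd_differentiable (T : R -> Prop) (alpha : R) (f : R -> R) : Prop :=
  forall t, T_kappa_up T t -> exists D, is_delta_fd T alpha f t D.

Definition nabla_fd_differentiable (T : R -> Prop) (alpha : R) (f : R -> R) : Prop :=
  forall t, T_kappa_low T t -> exists D, is_nabla_fd T alpha f t D.

Definition sym_fd_differentiable (T : R -> Prop) (alpha : R) (f : R -> R) : Prop :=
  forall t, T_kappa_both T t -> exists D, is_sym_fd T alpha f t D.

Definition lim_in (T : R -> Prop) (t : R) (g : R -> R) (l : R) : Prop :=
  forall eps, 0 < eps -> exists delta, 0 < delta /\
    forall s, T s -> s <> t -> Rabs (s - t) < delta -> Rabs (g s - l) < eps.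

(* For s <= t near t, the symmetric increment splits into the delta increment
   f(sigma t) - f(s) over A = sigma t - s and the nabla increment
   f(2t - s) - f(rho t) over B = 2t - s - rho t, with A, B >= 0 and
   A + B = sigma t + 2t - 2s - rho t.  Multiplicativity of x |-> x^alpha on
   [0, oo) gives A^alpha = (A / (A + B))^alpha (A + B)^alpha, and the weights
   (A / (A + B))^alpha, (B / (A + B))^alpha tend to gamma1, gamma2.  For s > t
   near t both jumps vanish, sigma t = rho t = t, and the symmetric quotient is
   odd under s |-> 2t - s, which reduces this case to the first one. *)

From Stdlib Require Import Reals Lra.
From Coquelicot Require Import Coquelicot.
Open Scope R_scope.

Lemma fpow_0 a : fpow a 0 = 0.
Proof. unfold fpow; destruct (Rlt_dec 0 0); [lra|]; destruct (Rlt_dec 0 0); [lra|]; auto. Qed.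

Lemma fpow_Rpower a x : 0 < x -> fpow a x = Rpower x a.
Proof. intros Hx; unfold fpow; destruct (Rlt_dec 0 x); [auto|lra]. Qed.

Lemma fpow_opp a x : fpow a (- x) = - fpow a x.
Proof.
  unfold fpow.
  destruct (Rlt_dec 0 (-x)), (Rlt_dec 0 x), (Rlt_dec (-x) 0), (Rlt_dec x 0);
    rewrite ?Ropp_involutive; lra.
Qed.

Lemma fpow_ge0 a x : 0 <= x -> 0 <= fpow a x.
Proof.
  intros Hx; destruct (Req_dec x 0) as [->|Hx0]; [rewrite fpow_0; lra|].
  rewrite fpow_Rpower by lra; apply Rlt_le, exp_pos.
Qed.

Lemma Rabs_fpow a x : Rabs (fpow a x) = fpow a (Rabs x).
Proof.
  destruct (Rle_dec 0 x) as [Hx|Hx].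
  - rewrite !Rabs_pos_eq; auto using fpow_ge0.
  - rewrite <- (Ropp_involutive x) at 1.
    rewrite fpow_opp, Rabs_Ropp, (Rabs_left x) by lra.
    apply Rabs_pos_eq, fpow_ge0; lra.
Qed.

Lemma fpow_le a x y : 0 <= a -> 0 <= x <= y -> fpow a x <= fpow a y.
Proof.
  intros Ha [Hx Hxy]; destruct (Req_dec x 0) as [->|Hx0].
  - rewrite fpow_0; apply fpow_ge0; lra.
  - rewrite !fpow_Rpower by lra; apply Rle_Rpower_l; lra.
Qed.

Lemma fpow_lt a x y : 0 < a -> 0 <= x < y -> fpow a x < fpow a y.
Proof.
  intros Ha [Hx Hxy]; destruct (Req_dec x 0) as [->|Hx0].
  - rewrite fpow_0, fpow_Rpower by lra; apply exp_pos.
  - rewrite !fpow_Rpower by lra; apply Rlt_Rpower_l; lra.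
Qed.

Lemma fpow_mult a x y : 0 <= x -> 0 <= y -> fpow a (x * y) = fpow a x * fpow a y.
Proof.
  intros Hx Hy.
  destruct (Req_dec x 0) as [->|Hx0]; [rewrite Rmult_0_l, fpow_0; ring|].
  destruct (Req_dec y 0) as [->|Hy0]; [rewrite Rmult_0_r, fpow_0; ring|].
  rewrite !fpow_Rpower by nra; symmetry; apply Rpower_mult_distr; lra.
Qed.

Lemma fpow_continuous a x : 0 < a -> continuity_pt (fpow a) x.
Proof.
  intros Ha.
  assert (Hpos : forall x, 0 < x -> continuity_pt (fpow a) x).
  { clear x; intros x Hx.
    apply (continuity_pt_locally_ext (fun y => Rpower y a) _ x x Hx).
    - intros y Hy; unfold Rdist in Hy; apply Rabs_def2 in Hy.
      rewrite fpow_Rpower; lra.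
    - apply derivable_continuous_pt.
      exists (a * Rpower x (a - 1)); apply derivable_pt_lim_power; lra. }
  destruct (Rtotal_order x 0) as [Hx|[->|Hx]]; auto.
  - apply (continuity_pt_ext (opp_fct (comp (fpow a) Ropp))).
    { intro y; unfold opp_fct, comp; rewrite fpow_opp; ring. }
    apply continuity_pt_opp, continuity_pt_comp; [reg|].
    apply Hpos; lra.
  - (* |y| < eps^(1/a) gives |fpow a y| < eps *)
    intros eps Heps; exists (Rpower eps (/ a)); split; [apply exp_pos|].
    intros y [_ Hy]; simpl in *; unfold R_dist in *.
    rewrite fpow_0, !Rminus_0_r in *; rewrite Rabs_fpow.
    replace eps with (fpow a (Rpower eps (/ a))).
    + apply fpow_lt; auto; split; [apply Rabs_pos | exact Hy].
    + rewrite fpow_Rpower by apply exp_pos.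
      rewrite Rpower_mult, Rinv_l, Rpower_1; lra.
Qed.

Lemma continuity_pt_eps g x : continuity_pt g x ->
  forall eps, 0 < eps -> exists d, 0 < d /\
    forall y, Rabs (y - x) < d -> Rabs (g y - g x) < eps.
Proof.
  intros Hg eps Heps; destruct (Hg eps Heps) as [d [Hd Hnear]].
  exists d; split; auto; intros y Hy.
  destruct (Req_dec y x) as [->|Hyx].
  - rewrite Rminus_diag, Rabs_R0; auto.
  - apply (Hnear y); repeat split; auto.
Qed.

(* The limit of [fpow a ((c - s) / (sg + 2 t - 2 s - rh))] as [s -> t]; when
   [rh = sg] the quotient is identically [1/2] away from [s = t]. *)
Definition sym_weight (a t sg rh c : R) : R :=
  if Req_EM_T rh sg then fpow a (/ 2) else fpow a ((c - t) / (sg - rh)).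

Lemma sym_weight_near a t sg rh c : 0 < a -> (rh = sg -> c = t) ->
  forall eps, 0 < eps -> exists d, 0 < d /\
    forall s, Rabs (s - t) < d -> (rh = sg -> s <> t) ->
      Rabs (fpow a ((c - s) / (sg + 2 * t - 2 * s - rh)) - sym_weight a t sg rh c) < eps.
Proof.
  intros Ha Hc eps Heps; unfold sym_weight.
  destruct (Req_EM_T rh sg) as [Hrs|Hne].
  - exists 1; split; [lra|]; intros s _ Hst.
    specialize (Hst Hrs); rewrite Hrs, (Hc Hrs).
    replace ((t - s) / (sg + 2 * t - 2 * s - sg)) with (/ 2)
      by (field; intro; apply Hst; lra).
    rewrite Rminus_diag, Rabs_R0; auto.
  - set (g := fun s => fpow a ((c - s) / (sg + 2 * t - 2 * s - rh))).
    assert (Hg : continuity_pt g t).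
    { change (continuity_pt
        (comp (fpow a) (fun s => (c - s) / (sg + 2 * t - 2 * s - rh))) t).
      apply continuity_pt_comp.
      - reg; intro; apply Hne; lra.
      - apply fpow_continuous; auto. }
    destruct (continuity_pt_eps g t Hg eps Heps) as [d [Hd Hnear]].
    exists d; split; auto; intros s Hs _.
    replace ((c - t) / (sg - rh)) with ((c - t) / (sg + 2 * t - 2 * t - rh))
      by (f_equal; ring).
    exact (Hnear s Hs).
Qed.

Lemma lim_in_sym_weight T a t sg rh c : 0 < a -> (rh = sg -> c = t) ->
  lim_in T t (fun s => fpow a ((c - s) / (sg + 2 * t - 2 * s - rh)))
    (sym_weight a t sg rh c).
Proof.
  intros Ha Hc eps Heps.
  destruct (sym_weight_near a t sg rh c Ha Hc eps Heps) as [d [Hd Hnear]].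
  exists d; split; auto; intros s _ Hst Hs; auto.
Qed.

Lemma lim_in_ext T t g h l : (forall s, g s = h s) -> lim_in T t g l -> lim_in T t h l.
Proof.
  intros Hgh Hg eps Heps; destruct (Hg eps Heps) as [d [Hd Hnear]].
  exists d; split; auto; intros s Ts Hst Hs; rewrite <- Hgh; auto.
Qed.

Lemma ts_sigma_spec T t :
  t <= ts_sigma T t /\ forall s, T s -> t < s -> ts_sigma T t <= s.
Proof.
  unfold ts_sigma.
  destruct (Glb_Rbar_correct (fun s => T s /\ t < s)) as [Hlb Hglb].
  revert Hlb Hglb; destruct (Glb_Rbar _) as [x| |]; intros Hlb Hglb.
  - split; [apply (Hglb (Finite t)); intros y [_ Hy]; simpl; lra|].
    intros s Ts Hs; apply (Hlb s); auto.
  - split; [lra|]; intros s Ts Hs; destruct (Hlb s); auto.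
  - destruct (Hglb (Finite t)); intros y [_ Hy]; simpl; lra.
Qed.

Lemma ts_rho_spec T t :
  ts_rho T t <= t /\ forall s, T s -> s < t -> s <= ts_rho T t.
Proof.
  unfold ts_rho.
  destruct (Lub_Rbar_correct (fun s => T s /\ s < t)) as [Hub Hlub].
  revert Hub Hlub; destruct (Lub_Rbar _) as [x| |]; intros Hub Hlub.
  - split; [apply (Hlub (Finite t)); intros y [_ Hy]; simpl; lra|].
    intros s Ts Hs; apply (Hub s); auto.
  - destruct (Hlub (Finite t)); intros y [_ Hy]; simpl; lra.
  - split; [lra|]; intros s Ts Hs; destruct (Hub s); auto.
Qed.

Lemma ts_sigma_eq_near T t :
  exists d, 0 < d /\ forall s, T s -> t < s < t + d -> ts_sigma T t = t.
Proof.
  destruct (ts_sigma_spec T t) as [Hge Hmin].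
  destruct (Rlt_dec t (ts_sigma T t)) as [Hgap|Hdense].
  - exists (ts_sigma T t - t); split; [lra|].
    intros s Ts Hs; specialize (Hmin s Ts (proj1 Hs)); lra.
  - exists 1; split; [lra|]; intros; lra.
Qed.

Lemma ts_rho_eq_near T t :
  exists d, 0 < d /\ forall s, T s -> t - d < s < t -> ts_rho T t = t.
Proof.
  destruct (ts_rho_spec T t) as [Hle Hmax].
  destruct (Rlt_dec (ts_rho T t) t) as [Hgap|Hdense].
  - exists (t - ts_rho T t); split; [lra|].
    intros s Ts Hs; specialize (Hmax s Ts (proj2 Hs)); lra.
  - exists 1; split; [lra|]; intros; lra.
Qed.

Lemma fpow_weight_error a A C G e : 0 <= A <= C -> 0 <= e ->
  (0 < C -> Rabs (fpow a (A / C) - G) <= e) ->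
  Rabs (fpow a A - G * fpow a C) <= e * fpow a C.
Proof.
  intros [HA HAC] He Hw.
  destruct (Req_dec C 0) as [HC|HC].
  - replace A with 0 by lra; rewrite HC, fpow_0, Rmult_0_r, Rminus_0_r, Rabs_R0; lra.
  - replace A with (A / C * C) at 1 by (field; auto).
    rewrite fpow_mult by (try apply Rdiv_le_0_compat; lra).
    replace (fpow a (A / C) * fpow a C - G * fpow a C)
      with ((fpow a (A / C) - G) * fpow a C) by ring.
    rewrite Rabs_mult, (Rabs_pos_eq (fpow a C)) by (apply fpow_ge0; lra).
    apply Rmult_le_compat_r; [apply fpow_ge0; lra | apply Hw; lra].
Qed.

Lemma Rabs_sum_estimate u v dD dN xA xB X g1 g2 e : 0 <= e ->
  0 <= xA <= X -> 0 <= xB <= X ->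
  Rabs (u - dD * xA) <= e * xA -> Rabs (v - dN * xB) <= e * xB ->
  Rabs (xA - g1 * X) <= e * X -> Rabs (xB - g2 * X) <= e * X ->
  Rabs (u + v - (g1 * dD + g2 * dN) * X) <= e * (2 + Rabs dD + Rabs dN) * X.
Proof.
  intros He [HA HAX] [HB HBX] Hu Hv HgA HgB.
  replace (u + v - (g1 * dD + g2 * dN) * X) with
    ((u - dD * xA) + (v - dN * xB) + (dD * (xA - g1 * X) + dN * (xB - g2 * X)))
    by ring.
  assert (Rabs dD * Rabs (xA - g1 * X) <= Rabs dD * (e * X))
    by (apply Rmult_le_compat_l; auto; apply Rabs_pos).
  assert (Rabs dN * Rabs (xB - g2 * X) <= Rabs dN * (e * X))
    by (apply Rmult_le_compat_l; auto; apply Rabs_pos).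
  pose proof (Rabs_triang (u - dD * xA + (v - dN * xB))
                (dD * (xA - g1 * X) + dN * (xB - g2 * X))).
  pose proof (Rabs_triang (u - dD * xA) (v - dN * xB)).
  pose proof (Rabs_triang (dD * (xA - g1 * X)) (dN * (xB - g2 * X))).
  rewrite !Rabs_mult in *.
  nra.
Qed.

Definition sym_diff T (f : R -> R) t s : R :=
  f (ts_sigma T t) - f s + f (2 * t - s) - f (ts_rho T t).

Definition sym_incr T t s : R := ts_sigma T t + 2 * t - 2 * s - ts_rho T t.

Definition gamma1 T a t : R :=
  sym_weight a t (ts_sigma T t) (ts_rho T t) (ts_sigma T t).

Definition gamma2 T a t : R :=
  sym_weight a t (ts_sigma T t) (ts_rho T t) (2 * t - ts_rho T t).

Lemma lim_in_gamma1 T a t : 0 < a ->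
  lim_in T t (fun s => fpow a ((ts_sigma T t - s) / sym_incr T t s)) (gamma1 T a t).
Proof.
  intros Ha; apply lim_in_sym_weight; auto.
  pose proof (ts_sigma_spec T t); pose proof (ts_rho_spec T t); lra.
Qed.

Lemma lim_in_gamma2 T a t : 0 < a ->
  lim_in T t (fun s => fpow a ((2 * t - s - ts_rho T t) / sym_incr T t s))
    (gamma2 T a t).
Proof.
  intros Ha; eapply lim_in_ext; [|apply lim_in_sym_weight; auto].
  - intro s; simpl; f_equal; f_equal; ring.
  - pose proof (ts_sigma_spec T t); pose proof (ts_rho_spec T t); lra.
Qed.

Lemma sym_diff_reflect T f t s : ts_sigma T t = ts_rho T t ->
  sym_diff T f t s = - sym_diff T f t (2 * t - s).
Proof.
  intros Hsr; unfold sym_diff; rewrite Hsr.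
  replace (2 * t - (2 * t - s)) with s by ring; ring.
Qed.

Lemma sym_incr_reflect T t s : ts_sigma T t = ts_rho T t ->
  sym_incr T t s = - sym_incr T t (2 * t - s).
Proof. intros Hsr; unfold sym_incr; rewrite Hsr; ring. Qed.

Lemma sym_fd_estimate_left T a f t dD dN : 0 < a ->
  is_delta_fd T a f t dD -> is_nabla_fd T a f t dN ->
  forall eps, 0 < eps -> exists d, 0 < d /\
    forall s, T s -> T (2 * t - s) -> t - d < s <= t ->
      Rabs (sym_diff T f t s
            - (gamma1 T a t * dD + gamma2 T a t * dN) * fpow a (sym_incr T t s))
      <= eps * fpow a (sym_incr T t s).
Proof.
  intros Ha HD HN eps Heps.
  destruct (ts_sigma_spec T t) as [Hsg _]; destruct (ts_rho_spec T t) as [Hrh _].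
  unfold sym_diff, sym_incr, gamma1, gamma2.
  set (sg := ts_sigma T t) in *; set (rh := ts_rho T t) in *.
  set (K := 2 + Rabs dD + Rabs dN).
  assert (HK : 0 < K) by (pose proof (Rabs_pos dD); pose proof (Rabs_pos dN); unfold K; lra).
  set (e := eps / K); assert (He : 0 < e) by (apply Rdiv_lt_0_compat; auto).
  destruct (HD e He) as [dd [Hdd PD]]; destruct (HN e He) as [dn [Hdn PN]].
  destruct (sym_weight_near a t sg rh sg Ha ltac:(lra) e He) as [d1 [Hd1 P1]].
  destruct (sym_weight_near a t sg rh (2 * t - rh) Ha ltac:(lra) e He)
    as [d2 [Hd2 P2]].
  set (d := Rmin (Rmin dd dn) (Rmin d1 d2)).
  assert (Hd : d <= dd /\ d <= dn /\ d <= d1 /\ d <= d2)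
    by (unfold d, Rmin; repeat destruct Rle_dec; lra).
  exists d; split; [unfold d; repeat apply Rmin_pos; auto|].
  intros s Ts Ts' [Hs Hst].
  assert (QD : Rabs (f sg - f s - dD * fpow a (sg - s)) <= e * fpow a (sg - s)).
  { rewrite <- (Rabs_pos_eq (sg - s)) at 2 by lra.
    apply PD; auto; intros _; lra. }
  assert (QN : Rabs (f (2 * t - s) - f rh - dN * fpow a (2 * t - s - rh))
               <= e * fpow a (2 * t - s - rh)).
  { rewrite <- (Rabs_pos_eq (2 * t - s - rh)) at 2 by lra.
    apply PN; auto; intros _; lra. }
  assert (Hnear : Rabs (s - t) < d1 /\ Rabs (s - t) < d2)
    by (split; apply Rabs_def1; lra).
  assert (W1 : Rabs (fpow a (sg - s) - sym_weight a t sg rh sg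
                                       * fpow a (sg + 2 * t - 2 * s - rh))
               <= e * fpow a (sg + 2 * t - 2 * s - rh)).
  { apply fpow_weight_error; [lra | lra |].
    intros Hpos; left; apply P1; [tauto |].
    intros Hsr ->; lra. }
  assert (W2 : Rabs (fpow a (2 * t - s - rh) - sym_weight a t sg rh (2 * t - rh)
                                       * fpow a (sg + 2 * t - 2 * s - rh))
               <= e * fpow a (sg + 2 * t - 2 * s - rh)).
  { apply fpow_weight_error; [lra | lra |].
    intros Hpos; left.
    replace (2 * t - s - rh) with (2 * t - rh - s) by ring.
    apply P2; [tauto |].
    intros Hsr ->; lra. }
  replace (f sg - f s + f (2 * t - s) - f rh)
    with ((f sg - f s) + (f (2 * t - s) - f rh)) by ring.
  replace eps with (e * K) by (unfold e; field; lra).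
  apply (Rabs_sum_estimate _ _ _ _ (fpow a (sg - s)) (fpow a (2 * t - s - rh)));
    auto; try lra; split; try (apply fpow_ge0; lra); apply fpow_le; lra.
Qed.

Lemma is_sym_fd_of_delta_nabla T a f t dD dN : 0 < a ->
  is_delta_fd T a f t dD -> is_nabla_fd T a f t dN ->
  is_sym_fd T a f t (gamma1 T a t * dD + gamma2 T a t * dN).
Proof.
  intros Ha HD HN eps Heps.
  destruct (sym_fd_estimate_left T a f t dD dN Ha HD HN eps Heps)
    as [d0 [Hd0 Hleft]].
  destruct (ts_sigma_eq_near T t) as [d1 [Hd1 Hsg]].
  destruct (ts_rho_eq_near T t) as [d2 [Hd2 Hrh]].
  set (d := Rmin d0 (Rmin d1 d2)).
  assert (Hd : d <= d0 /\ d <= d1 /\ d <= d2)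
    by (unfold d, Rmin; repeat destruct Rle_dec; lra).
  exists (fun x => T x /\ Rabs (x - t) < d); split; [|split].
  - intros x [Tx _]; exact Tx.
  - exists d; split; [unfold d; repeat apply Rmin_pos; auto | auto].
  - intros s [Ts Hs] [Ts' Hs']; apply Rabs_def2 in Hs.
    change (Rabs (sym_diff T f t s - (gamma1 T a t * dD + gamma2 T a t * dN)
                                     * fpow a (sym_incr T t s))
            <= eps * fpow a (Rabs (sym_incr T t s))).
    destruct (Rle_dec s t) as [Hst|Hts].
    + rewrite (Rabs_pos_eq (sym_incr T t s)); [apply Hleft; auto; lra|].
      pose proof (ts_sigma_spec T t); pose proof (ts_rho_spec T t).
      unfold sym_incr; lra.
    + assert (Esg : ts_sigma T t = t) by (apply (Hsg s); auto; lra).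
      assert (Erh : ts_rho T t = t) by (apply (Hrh (2 * t - s)); auto; lra).
      assert (Hsr : ts_sigma T t = ts_rho T t) by congruence.
      rewrite (sym_diff_reflect T f t s Hsr), (sym_incr_reflect T t s Hsr).
      rewrite fpow_opp, Rabs_Ropp, (Rabs_pos_eq (sym_incr T t (2 * t - s)))
        by (unfold sym_incr; lra).
      match goal with |- Rabs (- ?X - ?D * - ?Y) <= _ =>
        replace (- X - D * - Y) with (- (X - D * Y)) by ring end.
      rewrite Rabs_Ropp; apply Hleft; auto; [|lra].
      replace (2 * t - (2 * t - s)) with s by ring; exact Ts.
Qed.

Theorem proposition3p29 (T : R -> Prop) (alpha : R) (f : R -> R) :
  time_scale T -> 0 < alpha <= 1 ->
  delta_fd_differentiable T alpha f ->
  nabla_fd_differentiable T alpha f ->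
  sym_fd_differentiable T alpha f /\
  forall t, T_kappa_both T t ->
  forall dD dN, is_delta_fd T alpha f t dD -> is_nabla_fd T alpha f t dN ->
  exists g1 g2,
    lim_in T t (fun s => fpow alpha ((ts_sigma T t - s)
                   / (ts_sigma T t + 2 * t - 2 * s - ts_rho T t))) g1 /\
    lim_in T t (fun s => fpow alpha (((2 * t - s) - ts_rho T t)
                   / (ts_sigma T t + 2 * t - 2 * s - ts_rho T t))) g2 /\
    is_sym_fd T alpha f t (g1 * dD + g2 * dN).
Proof.
  intros _ [Ha _] HD HN; split.
  - intros t [Hlow Hup].
    destruct (HD t Hup) as [dD PD]; destruct (HN t Hlow) as [dN PN].
    eexists; exact (is_sym_fd_of_delta_nabla T alpha f t dD dN Ha PD PN).
  - intros t _ dD dN PD PN.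
    exists (gamma1 T alpha t), (gamma2 T alpha t); split; [|split].
    + exact (lim_in_gamma1 T alpha t Ha).
    + exact (lim_in_gamma2 T alpha t Ha).
    + exact (is_sym_fd_of_delta_nabla T alpha f t dD dN Ha PD PN).
Qed.
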